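(* Let $p$ be a prime, $n\geq 3$, and $V$ an $n$-dimensional vector space over $\mathbb{F}_p$. Let $X\subseteq SL(V)$ be a symmetric generating set of $SL(V)$ (i.e. $X=X^{-1}$) with $1\in X$, and suppose $X$ contains a transvection $t$. Let $$\mathcal{C}_n=\{x_n\cdots x_1\, t\, x_1^{-1}\cdots x_n^{-1}\,:\,x_1,\ldots,x_n\in X\}=\{r_1=t,r_2,\ldots,r_m\},$$ and write $r_i=1+v_i\otimes\phi_i$ for $1\le i\le m$. Then $\langle v_1,\ldots,v_m\rangle=V$, and the transvection graph $\Gamma(\mathcal{C}_n)$ contains a directed cycle.
   Context: A transvection is an element $1+d\otimes\phi\in SL(V)$, acting by $x\mapsto x+\phi(x)d$, with $0\neq d\in V$, $0\neq\phi\in V^*$, $\phi(d)=0$. For a set $Y$ of transvections, the transvection graph $\Gamma(Y)$ is the directed graph with vertex set $Y\setminus\{1\}$ and a directed edge from $1+d_1\otimes\phi_1$ to $1+d_2\otimes\phi_2$ if and only if $\phi_2(d_1)\neq 0$. *)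

From HB Require Import structures.
From mathcomp Require Import all_boot all_order all_algebra.
Set Implicit Arguments. Unset Strict Implicit. Unset Printing Implicit Defensive.
Import GRing.Theory.
Local Open Scope ring_scope.

(* V = column vectors 'cV[F]_n; a matrix g acts by x |-> g *m x.
   A linear functional phi in V^* is a row vector, phi(x) = phi *m x. *)

Definition transv_decomp (F : fieldType) (n : nat) (g : 'M[F]_n)
  (d : 'cV[F]_n) (phi : 'rV[F]_n) : Prop :=
  [/\ d != 0, phi != 0, phi *m d = 0 & g = 1%:M + d *m phi].

Definition is_transvection (F : fieldType) (n : nat) (g : 'M[F]_n) : Prop :=
  exists d phi, transv_decomp g d phi.

Definition mxprod (F : fieldType) (n : nat) (s : seq 'M[F]_n) : 'M[F]_n :=
  foldr (fun a b => a *m b) 1%:M s.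

Definition generates_SL (F : finFieldType) (n : nat) (X : {set 'M[F]_n}) : Prop :=
  forall g : 'M[F]_n, \det g = 1 ->
    exists s : seq 'M[F]_n, all (fun x => x \in X) s /\ g = mxprod s.

(* C_k = { x_k ... x_1 t x_1^-1 ... x_k^-1 : x_i in X }; a tuple
   [:: x_k; ...; x_1] has product w = x_k...x_1 and w^-1 = x_1^-1...x_k^-1. *)
Definition Cset (F : finFieldType) (n k : nat) (X : {set 'M[F]_n}) (t : 'M[F]_n)
  : {set 'M[F]_n} :=
  [set c | [exists s : k.-tuple 'M[F]_n,
      all (fun x => x \in X) s && (c == mxprod s *m t *m invmx (mxprod s))]].

Definition tg_edge (F : finFieldType) (n : nat) (Y : {set 'M[F]_n}) (g h : 'M[F]_n)
  : Prop :=
  [/\ g \in Y, g != 1%:M, h \in Y, h != 1%:M &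
    exists d1 f1 d2 f2, [/\ transv_decomp g d1 f1, transv_decomp h d2 f2 &
                          f2 *m d1 != 0]].

Definition has_directed_cycle (F : finFieldType) (n : nat) (Y : {set 'M[F]_n}) : Prop :=
  exists s : seq 'M[F]_n, [/\ 0 < size s, uniq s &
    forall i, i < size s ->
      tg_edge Y (nth 1%:M s i) (nth 1%:M s (i.+1 %% size s))]%N.

From mathcomp Require Import all_boot all_algebra zify.
Set Implicit Arguments.
Unset Strict Implicit.
Unset Printing Implicit Defensive.

Import GRing.Theory.
Local Open Scope ring_scope.

(* Every element of C_n is a conjugate w t w^-1 = 1 + (w d) (x) (phi w^-1) by
   a word w of length n in X, and a transvection determines its decomposition
   up to scalars.  For a nonzero row vector u, the span of the u w, w ranging
   over the words of length k, grows with k until it is stable under X, hence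
   under SL(V); as SL(V) acts irreducibly it is then all of V, which happens
   after at most n steps.  Applied to d (through transposition) and to phi
   (through X = X^-1) this shows that the centres v_r span V and the
   functionals phi_r span V^*.  So no v_r is killed by all the phi_r': every
   vertex of Gamma(C_n) has an out-neighbour, and following out-neighbours in
   a finite digraph eventually closes a directed cycle. *)

Section SLStableSubspaces.
Variable F : fieldType.

Lemma det_elementary n (i j : 'I_n) (c : F) :
  i != j -> \det (1%:M + c *: delta_mx i j) = 1.
Proof.
wlog lt_ji : i j / (j < i)%N => [base neq_ij|neq_ij].
  have [lt_ji|lt_ij|eq_ji] := ltngtP j i; first exact: base.
  - by rewrite -det_tr linearD /= trmx1 linearZ /= trmx_delta base // eq_sym.
  - by rewrite (val_inj eq_ji) eqxx in neq_ij.
rewrite det_trig; last first.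
  apply/is_trig_mxP => a b lt_ab; rewrite !mxE -val_eqE /= ltn_eqF // add0r.
  case: eqP => [ai|]; case: eqP => [bj|] //=; rewrite ?mulr0 //.
  by move: lt_ab; rewrite ai bj; lia.
rewrite big1 // => k _; rewrite !mxE eqxx.
by case: eqP => [->|_]; rewrite ?(negPf neq_ij) mulr0 addr0.
Qed.

Lemma mul_rV_delta_mx n (u : 'rV[F]_n) (i j : 'I_n) :
  u *m delta_mx i j = u 0 i *: delta_mx 0 j.
Proof.
apply/matrixP => a b; rewrite !mxE (bigD1 i) //= big1 ?addr0.
  by rewrite !mxE eqxx /= !ord1 eqxx.
by move=> k /negPf neq_ki; rewrite !mxE neq_ki mulr0.
Qed.

Variables (n : nat) (S : 'M[F]_n).
Hypothesis S_stable : forall g : 'M[F]_n, \det g = 1 -> stablemx S g.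

Lemma SL_stable_delta_sub (u : 'rV[F]_n) (i j : 'I_n) :
  (u <= S)%MS -> u 0 i != 0 -> i != j -> ((delta_mx 0 j : 'rV[F]_n) <= S)%MS.
Proof.
move=> uS ui_neq0 neq_ij.
have := submx_trans (submxMr _ uS) (S_stable (det_elementary (u 0 i)^-1 neq_ij)).
rewrite mulmxDr mulmx1 -scalemxAr mul_rV_delta_mx scalerA mulVf // scale1r.
by move=> ueS; rewrite -(addKr u (delta_mx 0 j)) addmx_sub // eqmx_opp.
Qed.

Lemma SL_stable_row_full : S != 0 -> row_full S.
Proof.
move=> S_neq0; have [n_le1|n_gt1] := leqP n 1.
  rewrite /row_full eqn_leq rank_leq_col /=.
  by apply: leq_trans n_le1 _; rewrite lt0n mxrank_eq0.
case/rowV0Pn: S_neq0 => u uS /rV0Pn[i ui_neq0].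
have ekS k : k != i -> ((delta_mx 0 k : 'rV[F]_n) <= S)%MS.
  by move=> neq_ki; apply: SL_stable_delta_sub uS ui_neq0 _; rewrite eq_sym.
have [j neq_ji] : exists j, j != i by apply/card_gt0P; rewrite cardC1 card_ord; lia.
rewrite -sub1mx; apply/row_subP => k; rewrite row1.
have [->|/ekS//] := eqVneq k i.
by apply: SL_stable_delta_sub (ekS j neq_ji) _ neq_ji; rewrite mxE !eqxx oner_neq0.
Qed.

End SLStableSubspaces.

Section Products.
Variable F : fieldType.

Lemma mxprod_cat n (s1 s2 : seq 'M[F]_n) :
  mxprod (s1 ++ s2) = mxprod s1 *m mxprod s2.
Proof. by elim: s1 => [|x s1 IH] /=; rewrite ?mul1mx // IH mulmxA. Qed.

Lemma mxprod_rcons n (s : seq 'M[F]_n) x : mxprod (rcons s x) = mxprod s *m x.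
Proof. by rewrite -cats1 mxprod_cat /= mulmx1. Qed.

Lemma mxprod_nseq1 n k : mxprod (nseq k (1%:M : 'M[F]_n)) = 1%:M.
Proof. by elim: k => //= k ->; rewrite mulmx1. Qed.

Lemma trmx_mxprod n (s : seq 'M[F]_n) : (mxprod s)^T = mxprod (rev (map trmx s)).
Proof.
by elim: s => [|x s IH] /=; rewrite ?trmx1 // trmx_mul IH rev_cons mxprod_rcons.
Qed.

Lemma invmxM n (x y : 'M[F]_n) : x \in unitmx -> y \in unitmx ->
  invmx (x *m y) = invmx y *m invmx x.
Proof.
move=> x_unit y_unit; have xy_unit : x *m y \in unitmx by rewrite unitmx_mul x_unit.
rewrite -[LHS]mulmx1; apply: canLR (mulKmx xy_unit) _.
by rewrite -mulmxA (mulmxA y) mulmxV // mul1mx mulmxV.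
Qed.

Lemma unitmx_mxprod n (s : seq 'M[F]_n) : all [in unitmx] s -> mxprod s \in unitmx.
Proof.
by elim: s => [|x s IH] /=; rewrite ?unitmx1 // => /andP[? ?]; rewrite unitmx_mul IH ?andbT.
Qed.

Lemma invmx_mxprod n (s : seq 'M[F]_n) : all [in unitmx] s ->
  invmx (mxprod s) = mxprod (rev (map invmx s)).
Proof.
elim: s => [|x s IH] /=; first by rewrite invmx1.
case/andP=> x_unit s_unit.
by rewrite rev_cons mxprod_rcons -IH // invmxM // unitmx_mxprod.
Qed.

End Products.

Lemma generates_SL_trmx (F : finFieldType) n (X : {set 'M[F]_n}) :
  generates_SL X -> generates_SL [set y | y^T \in X].
Proof.
move=> genX g det_g; have /genX[s [Xs gE]] : \det g^T = 1 by rewrite det_tr.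
exists (rev (map trmx s)); split; last by rewrite -trmx_mxprod -gE trmxK.
by rewrite all_rev all_map; apply: sub_all Xs => x Xx; rewrite /= inE trmxK.
Qed.

Section WordSpans.
Variables (F : finFieldType) (n : nat) (Y : {set 'M[F]_n}).
Hypotheses (Y1 : 1%:M \in Y) (genY : generates_SL Y).

Definition words_span k (u : 'rV[F]_n) :=
  (\sum_(s : k.-tuple 'M[F]_n | all [in Y] s) <<u *m mxprod s>>)%MS.

Lemma words_span_sup k u (s : k.-tuple 'M[F]_n) :
  all [in Y] s -> (u *m mxprod s <= words_span k u)%MS.
Proof. by move=> Ys; apply: (sumsmx_sup s) => //; rewrite genmxE. Qed.

Lemma words_span_mono k u : (words_span k u <= words_span k.+1 u)%MS.
Proof.
apply/sumsmx_subP => s Ys; rewrite genmxE.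
have := @words_span_sup k.+1 u [tuple of 1%:M :: s].
by rewrite /= mul1mx Y1 Ys; apply.
Qed.

Lemma words_span_mulmx k u y : y \in Y -> (words_span k u *m y <= words_span k.+1 u)%MS.
Proof.
move=> Yy; rewrite sumsmxMr; apply/sumsmx_subP => s Ys.
rewrite (eqmxMr _ (genmxE _)) -mulmxA -mxprod_rcons.
have := @words_span_sup k.+1 u [tuple of rcons s y].
by rewrite /= all_rcons Yy Ys; apply.
Qed.

Lemma words_span_neq0 k u : u != 0 -> words_span k u != 0.
Proof.
apply: contraNneq => span0; have := @words_span_sup k u [tuple of nseq k 1%:M].
by rewrite /= all_nseq Y1 orbT mxprod_nseq1 mulmx1 span0 submx0; apply.
Qed.

Lemma words_span_stable_row_full k u : u != 0 ->
  (words_span k.+1 u <= words_span k u)%MS -> row_full (words_span k u).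
Proof.
move=> u_neq0 span_stable; apply: (SL_stable_row_full _ (words_span_neq0 k u_neq0)).
move=> g /genY[s [Ys ->]]; elim: s Ys => [|y s IH] /=; first by rewrite mulmx1.
case/andP=> Yy Ys; rewrite mulmxA.
exact: submx_trans (submxMr _ (submx_trans (words_span_mulmx k u Yy) span_stable)) (IH Ys).
Qed.

Lemma words_span_rank k u : u != 0 -> (minn k.+1 n <= \rank (words_span k u))%N.
Proof.
move=> u_neq0; elim: k => [|k IH].
  by rewrite (leq_trans (geq_minl _ _)) // lt0n mxrank_eq0 words_span_neq0.
have [span_stable|span_grows] := boolP (words_span k.+1 u <= words_span k u)%MS.
  have /eqP full := words_span_stable_row_full u_neq0 span_stable.
  have := mxrankS (words_span_mono k u); rewrite full; lia.
have := ltn_leqif (mxrank_leqif_sup (words_span_mono k u)).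
rewrite (negPf span_grows) => lt_rank; lia.
Qed.

Lemma words_span_row_full k u : u != 0 -> (n <= k.+1)%N -> row_full (words_span k u).
Proof.
move=> u_neq0 le_nk; rewrite /row_full eqn_leq rank_leq_col /=.
by have := words_span_rank k u_neq0; rewrite (minn_idPr le_nk).
Qed.

End WordSpans.

Section Transvections.
Variables (F : fieldType) (n : nat).
Implicit Types (g w : 'M[F]_n) (a c : 'cV[F]_n) (b e : 'rV[F]_n).

Lemma col_row_eq_scalel a b c e : a *m b = c *m e -> b != 0 -> exists l, a = l *: c.
Proof.
move=> abE /rV0Pn[j bj_neq0]; exists (e 0 j / b 0 j).
apply/matrixP => i k; rewrite ord1 mxE.
have := congr1 (fun M : 'M[F]_n => M i j) abE; rewrite !mxE !big_ord1 => aibj.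
by rewrite -(mulfK bj_neq0 (a i 0)) aibj [RHS]mulrC mulrA.
Qed.

Lemma col_row_eq_scaler a b c e : a *m b = c *m e -> a != 0 -> exists l, b = l *: e.
Proof.
move=> abE a_neq0; have abE' : b^T *m a^T = e^T *m c^T by rewrite -!trmx_mul abE.
have [|l bE] := col_row_eq_scalel abE'; first by rewrite trmx_eq0.
by exists l; rewrite -[b]trmxK bE linearZ /= trmxK.
Qed.

Lemma transv_decomp_neq1 g a b : transv_decomp g a b -> g != 1%:M.
Proof.
case=> a_neq0 b_neq0 _ ->; rewrite -subr_eq0 addrC addKr.
apply: contra b_neq0 => /eqP ab0.
have [|l ->] := @col_row_eq_scaler a b a 0 _ a_neq0; last by rewrite scaler0.
by rewrite ab0 mulmx0.
Qed.

Lemma transv_decomp_scale g a b c e :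
  transv_decomp g a b -> transv_decomp g c e ->
  (exists l, a = l *: c) /\ (exists l, b = l *: e).
Proof.
case=> a_neq0 b_neq0 _ -> [_ _ _ /addrI abE].
by split; [apply: col_row_eq_scalel abE b_neq0 | apply: col_row_eq_scaler abE a_neq0].
Qed.

Lemma transv_decomp_conj w g a b : w \in unitmx -> transv_decomp g a b ->
  transv_decomp (w *m g *m invmx w) (w *m a) (b *m invmx w).
Proof.
move=> w_unit [a_neq0 b_neq0 ba0 ->]; split.
- by apply: contraNneq a_neq0 => /(congr1 (mulmx (invmx w))); rewrite mulKmx // mulmx0 => ->.
- by apply: contraNneq b_neq0 => /(congr1 (mulmx^~ w)); rewrite mulmxKV // mul0mx => ->.
- by rewrite mulmxA mulmxKV // ba0 mul0mx.
- by rewrite mulmxDr mulmx1 mulmxDl mulmxV // !mulmxA.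
Qed.

End Transvections.

Section SpanningFamilies.
Variables (F : fieldType) (I : finType) (P : pred I) (n : nat).

Lemma row_full_sums_trmx (v : I -> 'cV[F]_n) :
  row_full (\sum_(i | P i) <<(v i)^T>>)%MS ->
  forall x, exists c : I -> F, x = \sum_(i | P i) c i *: v i.
Proof.
move=> full x; have /sub_sums_genmxP[c xE] := submx_full x^T full.
exists (fun i => c i 0 0); rewrite -[x]trmxK xE linear_sum; apply: eq_bigr => i _.
by rewrite /= trmx_mul trmxK {1}[c i]mx11_scalar tr_scalar_mx mul_mx_scalar.
Qed.

Lemma row_full_sums_mul_neq0 (A : I -> 'rV[F]_n) (v : 'cV[F]_n) :
  row_full (\sum_(i | P i) <<A i>>)%MS -> v != 0 -> exists2 i, P i & A i *m v != 0.
Proof.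
move=> full v_neq0.
have [/existsP[i /andP[Pi Aiv]]|/existsPn none] := boolP [exists i, P i && (A i *m v != 0)].
  by exists i.
case/negP: v_neq0; have : (\sum_(i | P i) <<A i>> <= kermx v)%MS.
  by apply/sumsmx_subP => i Pi; rewrite genmxE sub_kermx; have := none i; rewrite Pi negbK.
by move/(submx_trans (submx_full 1%:M full)); rewrite sub_kermx mul1mx.
Qed.

End SpanningFamilies.

Section DirectedCycles.
Variable T : finType.
Local Open Scope nat_scope.

Lemma orbit_periodic (f : T -> T) x : exists k, fcycle f (orbit f (iter k f x)).
Proof.
have /trajectP[j lt_jm jE] := looping_order f x.
exists (order f x); apply/(orbitPcycle 0 3); exists (order f x - j).-1.
by rewrite prednK ?subn_gt0 // {1}jE -iterD subnK // ltnW.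
Qed.

Lemma nth_orbit_cycle (f : T -> T) x d i :
  fcycle f (orbit f x) -> i < order f x ->
  nth d (orbit f x) (i.+1 %% order f x) = f (nth d (orbit f x) i).
Proof.
move=> /(orbitPcycle 0 4) iter_order lt_im.
rewrite /orbit !(set_nth_default x) ?size_traject ?ltn_pmod // !nth_traject ?ltn_pmod //.
have [lt_i1m|ge_i1m] := ltnP i.+1 (order f x); first by rewrite modn_small.
have eq_i1m : i.+1 = order f x by apply/eqP; rewrite eqn_leq lt_im.
by rewrite -iterS eq_i1m modnn.
Qed.

Lemma directed_cycle_exists (Y : {set T}) (e : rel T) x d :
  x \in Y -> (forall y, y \in Y -> exists2 z, z \in Y & e y z) ->
  exists s, [/\ 0 < size s, uniq s, {subset s <= Y} &
    forall i, i < size s -> e (nth d s i) (nth d s (i.+1 %% size s))].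
Proof.
move=> Yx out; pose next y := odflt y [pick z in Y | e y z].
have nextP y : y \in Y -> (next y \in Y) && e y (next y).
  move=> Yy; rewrite /next; case: pickP => [z /andP[-> ->] //|none] /=.
  by have [z Yz eyz] := out y Yy; have := none z; rewrite Yz eyz.
have Y_iter k : iter k next x \in Y by elim: k => //= k /(nextP _)/andP[].
have [k cyc] := orbit_periodic next x.
have orbitY : {subset orbit next (iter k next x) <= Y}.
  by move=> y; rewrite -fconnect_orbit => /iter_findex <-; rewrite -iterD.
exists (orbit next (iter k next x)); rewrite size_orbit; split => // i lt_i.
have /(nextP _)/andP[_ edge] : nth d (orbit next (iter k next x)) i \in Y.
  by apply/orbitY/mem_nth; rewrite size_orbit.
by rewrite nth_orbit_cycle.
Qed.

End DirectedCycles.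

Section Conjugates.
Variables (F : finFieldType) (n : nat) (X : {set 'M[F]_n}) (t : 'M[F]_n).
Variables (d : 'cV[F]_n) (phi : 'rV[F]_n).
Hypotheses (detX : forall x, x \in X -> \det x = 1) (genX : generates_SL X).
Hypotheses (invX : forall x, x \in X -> invmx x \in X) (X1 : 1%:M \in X).
Hypothesis t_decomp : transv_decomp t d phi.

Local Notation C := (Cset n X t).

Lemma X_sub_unitmx : {subset X <= unitmx}.
Proof. by move=> x Xx; rewrite unitmxE detX ?unitr1. Qed.

Lemma word_unit (s : seq 'M[F]_n) : all [in X] s -> mxprod s \in unitmx.
Proof. by move=> Xs; apply/unitmx_mxprod/(sub_all X_sub_unitmx). Qed.

Lemma CsetP r : reflect
  (exists2 s : n.-tuple 'M[F]_n, all [in X] s & r = mxprod s *m t *m invmx (mxprod s))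
  (r \in C).
Proof.
rewrite inE; apply: (iffP existsP) => [[s /andP[Xs /eqP ->]]|[s Xs ->]]; exists s => //.
by rewrite Xs eqxx.
Qed.

Lemma t_in_Cset : t \in C.
Proof.
apply/CsetP; exists [tuple of nseq n 1%:M]; first by rewrite /= all_nseq X1 orbT.
by rewrite /= mxprod_nseq1 invmx1 mul1mx mulmx1.
Qed.

Lemma Cset_transv_decomp (s : seq 'M[F]_n) : all [in X] s ->
  transv_decomp (mxprod s *m t *m invmx (mxprod s))
    (mxprod s *m d) (phi *m invmx (mxprod s)).
Proof. by move=> Xs; apply: transv_decomp_conj (word_unit Xs) t_decomp. Qed.

Lemma Cset_decomp_exists :
  exists v psi, forall r, r \in C -> transv_decomp r (v r) (psi r).
Proof.
have /fin_all_exists[vpsi decomp] : forall r : 'M[F]_n,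
    exists vp : 'cV[F]_n * 'rV[F]_n, r \in C -> transv_decomp r vp.1 vp.2.
  move=> r; have [/CsetP[s Xs ->]|_] := boolP (r \in C); last by exists (0, 0).
  by exists (mxprod s *m d, phi *m invmx (mxprod s)) => _; apply: Cset_transv_decomp.
by exists (fun r => (vpsi r).1), (fun r => (vpsi r).2).
Qed.

Section Decompositions.
Variables (v : 'M[F]_n -> 'cV[F]_n) (psi : 'M[F]_n -> 'rV[F]_n).
Hypothesis decomp : forall r, r \in C -> transv_decomp r (v r) (psi r).

Lemma Cset_cols_row_full : row_full (\sum_(r in C) <<(v r)^T>>)%MS.
Proof.
have Y1 : 1%:M \in [set y | y^T \in X] by rewrite inE trmx1.
have dT_neq0 : d^T != 0 by rewrite trmx_eq0; case: t_decomp.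
have full := words_span_row_full Y1 (generates_SL_trmx genX) dT_neq0 (leqnSn n).
rewrite -sub1mx (submx_trans (submx_full _ full)) //.
apply/sumsmx_subP => s Ys; rewrite genmxE.
have Xs : all [in X] (rev (map trmx s)).
  by rewrite all_rev all_map; apply: sub_all Ys => y; rewrite inE.
pose w := mxprod [tuple of rev (map trmx s)].
have rC : w *m t *m invmx w \in C by apply/CsetP; exists [tuple of rev (map trmx s)].
have [[l dE] _] := transv_decomp_scale (Cset_transv_decomp Xs) (decomp rC).
have -> : d^T *m mxprod s = (w *m d)^T.
  by rewrite trmx_mul trmx_mxprod map_rev revK (mapK trmxK).
by rewrite dE linearZ scalemx_sub // (sumsmx_sup _ rC) // genmxE.
Qed.

Lemma Cset_funs_row_full : row_full (\sum_(r in C) <<psi r>>)%MS.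
Proof.
have phi_neq0 : phi != 0 by case: t_decomp.
have full := words_span_row_full X1 genX phi_neq0 (leqnSn n).
rewrite -sub1mx (submx_trans (submx_full _ full)) //.
apply/sumsmx_subP => s Xs; rewrite genmxE.
have Xs' : all [in X] (rev (map invmx s)).
  by rewrite all_rev all_map; apply: sub_all Xs => x /invX.
pose w := mxprod [tuple of rev (map invmx s)].
have rC : w *m t *m invmx w \in C by apply/CsetP; exists [tuple of rev (map invmx s)].
have [_ [l phiE]] := transv_decomp_scale (Cset_transv_decomp Xs') (decomp rC).
have -> : phi *m mxprod s = phi *m invmx w.
  by rewrite invmx_mxprod ?map_rev ?revK ?(mapK invmxK) // (sub_all X_sub_unitmx).
by rewrite phiE scalemx_sub // (sumsmx_sup _ rC) // genmxE.
Qed.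

Lemma Cset_out_neighbour r : r \in C -> exists2 r', r' \in C & psi r' *m v r != 0.
Proof.
move=> rC; apply: row_full_sums_mul_neq0 Cset_funs_row_full _.
by case: (decomp rC).
Qed.

End Decompositions.

Lemma Cset_directed_cycle : has_directed_cycle C.
Proof.
have [v [psi decomp]] := Cset_decomp_exists.
have [s [s_gt0 s_uniq sC edges]] := directed_cycle_exists
  (e := fun r r' => psi r' *m v r != 0) 1%:M t_in_Cset (Cset_out_neighbour decomp).
exists s; split => // i lt_i; have := edges i lt_i.
set r := nth _ s i; set r' := nth _ s _ => edge.
have rC : r \in C by apply/sC/mem_nth.
have r'C : r' \in C by apply/sC/mem_nth; rewrite ltn_pmod.
split=> //.
- exact: transv_decomp_neq1 (decomp _ rC).
- exact: transv_decomp_neq1 (decomp _ r'C).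
- by exists (v r), (psi r), (v r'), (psi r'); split=> //; apply: decomp.
Qed.

End Conjugates.

Theorem theorem3p1 (p n : nat) (X : {set 'M['F_p]_n}) (t : 'M['F_p]_n) :
  prime p -> (3 <= n)%N ->
  (forall x, x \in X -> \det x = 1) ->
  generates_SL X ->
  (forall x, x \in X -> invmx x \in X) ->
  1%:M \in X ->
  t \in X -> is_transvection t ->
  (forall (v : 'M['F_p]_n -> 'cV['F_p]_n) (phi : 'M['F_p]_n -> 'rV['F_p]_n),
     (forall r, r \in Cset n X t -> transv_decomp r (v r) (phi r)) ->
     forall x : 'cV['F_p]_n,
       exists c : 'M['F_p]_n -> 'F_p, x = \sum_(r in Cset n X t) c r *: v r)
  /\ has_directed_cycle (Cset n X t).
Proof.
move=> _ _ detX genX invX X1 _ [d [phi t_decomp]]; split.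
  move=> v psi decomp.
  exact: row_full_sums_trmx (Cset_cols_row_full detX genX X1 t_decomp decomp).
exact: Cset_directed_cycle detX genX invX X1 t_decomp.
Qed.
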